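(* For every nonzero limit ordinal $\alpha$, the structure $\mathrm{WS}(\omega^\alpha,<,\psi)$ is interpretable in $\mathrm{HF}(\alpha,<)$.
   Context: $\psi$ on ordinals: $\psi(0)=\omega$; if $\beta=\omega^{\beta_1}+\dots+\omega^{\beta_n}$ in Cantor normal form ($n\ge1$, $\beta_1\ge\dots\ge\beta_n$), $\psi(\beta)=\omega^{\beta_1}+\dots+\omega^{\beta_{n-1}}+\omega^{\beta_n+1}$. $(\gamma,<,\psi)$ is the structure on the ordinals below $\gamma$ with the usual order and $\psi$ (restricted). For a structure $\mathfrak{A}$ with domain $X$, $\mathrm{WS}(\mathfrak{A})$ is the two-sorted structure consisting of $\mathfrak{A}$ plus a second sort of all finite subsets of $X$ with the membership relation. For a relational structure $\mathfrak{A}$ with domain $A$, $\mathrm{HF}(\mathfrak{A})$ has domain $A^+$, the least set with $A\times\{\omega\}\subseteq A^+$ and every finite subset of $A^+$ belonging to $A^+$ (pairs in the Kuratowski sense, ordinals von Neumann); atoms are the elements $\pi(a)=(a,\omega)$, $a\in A$; its signature is that of $\mathfrak{A}$ (each relation holding exactly on tuples of atoms $\pi(a_1),\dots,\pi(a_n)$ with $\mathfrak{A}\models P(a_1,\dots,a_n)$) plus a unary predicate $\mathrm{At}$ true exactly of atoms and a binary $\in$ with $x\in y$ iff $y$ is not an atom and $x$ is a set-theoretic element of $y$. A many-sorted structure $\mathfrak{M}$ is interpretable in $\mathfrak{N}$ if each sort of $\mathfrak{M}$ is assigned a sort of $\mathfrak{N}$ and an injection of the domain into it, such that the image of each domain and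 the image of each relation and of the graph of each function of $\mathfrak{M}$ is first-order definable in $\mathfrak{N}$. *)

From Stdlib Require Import List Sorting.Sorted Classes.RelationClasses ClassicalEpsilon.
Import ListNotations.
Set Implicit Arguments.

Section Defs.
Variable T : Type.
Variable lt : T -> T -> Prop.

Definition nonzero_limit_ordinal : Prop :=
  StrictOrder lt /\ (forall x y, lt x y \/ x = y \/ lt y x) /\ well_founded lt /\
  inhabited T /\ (forall x, exists y, lt x y).

Definition is_succ (b c : T) : Prop := lt b c /\ forall d, lt b d -> ~ lt d c.
Definition is_least (z : T) : Prop := forall x, ~ lt x z.

(* ---------- ordinals below omega^alpha, via Cantor normal form:
   the list [b1; ...; bn] (b1 >= ... >= bn, all < alpha) denotes
   omega^b1 + ... + omega^bn; the empty list denotes 0. *)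
Definition Ord : Type := { l : list T | Sorted (fun x y => ~ lt x y) l }.

Fixpoint cnf_lt (l m : list T) : Prop :=
  match l, m with
  | nil, nil => False
  | nil, _ :: _ => True
  | _ :: _, nil => False
  | x :: l', y :: m' => lt x y \/ (x = y /\ cnf_lt l' m')
  end.

Definition ord_lt (x y : Ord) : Prop := cnf_lt (proj1_sig x) (proj1_sig y).

(* m is the CNF of (ordinal denoted by l) + omega^c *)
Definition cnf_add_term (l : list T) (c : T) (m : list T) : Prop :=
  exists l1 l2, l = l1 ++ l2 /\ Forall (fun x => ~ lt x c) l1 /\
    Forall (fun x => lt x c) l2 /\ m = l1 ++ [c].

(* graph of psi: psi(0) = omega = omega^1;
   psi(omega^b1+...+omega^bn) = (omega^b1+...+omega^b(n-1)) + omega^(bn+1) *)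
Definition psi_graph (x y : Ord) : Prop :=
  (proj1_sig x = nil /\ exists z o, is_least z /\ is_succ z o /\ proj1_sig y = [o])
  \/ exists l' b c, proj1_sig x = l' ++ [b] /\ is_succ b c /\ cnf_add_term l' c (proj1_sig y).

Definition FinSet : Type := { S : Ord -> Prop | exists l : list Ord, forall x, S x <-> In x l }.

(* ---------- HF(alpha,<): hereditarily finite sets with atoms from T *)
Inductive tree : Type :=
| Atom : T -> tree
| Node : list tree -> tree.

Inductive eqv : tree -> tree -> Prop :=
| eqv_atom a : eqv (Atom a) (Atom a)
| eqv_node l m :
    (forall x, In x l -> exists y, In y m /\ eqv x y) ->
    (forall y, In y m -> exists x, In x l /\ eqv x y) ->
    eqv (Node l) (Node m).

Definition rep (t : tree) : tree := epsilon (inhabits t) (fun s => eqv s t).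

(* the domain A^+ of HF(alpha,<): eqv-classes, via canonical representatives *)
Definition hf : Type := { t : tree | rep t = t }.

Definition hf_At (x : hf) : Prop := exists a, proj1_sig x = Atom a.
Definition hf_lt (x y : hf) : Prop :=
  exists a b, proj1_sig x = Atom a /\ proj1_sig y = Atom b /\ lt a b.
Definition hf_in (x y : hf) : Prop :=
  exists l, proj1_sig y = Node l /\ exists t, In t l /\ eqv t (proj1_sig x).

Inductive form : Type :=
| FLt : nat -> nat -> form
| FAt : nat -> form
| FIn : nat -> nat -> form
| FEq : nat -> nat -> form
| FNot : form -> form
| FAnd : form -> form -> form
| FEx : form -> form.

Definition scons (x : hf) (e : nat -> hf) (n : nat) : hf :=
  match n with 0 => x | S k => e k end.

Fixpoint sat (e : nat -> hf) (f : form) : Prop :=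
  match f with
  | FLt i j => hf_lt (e i) (e j)
  | FAt i => hf_At (e i)
  | FIn i j => hf_in (e i) (e j)
  | FEq i j => e i = e j
  | FNot g => ~ sat e g
  | FAnd g h => sat e g /\ sat e h
  | FEx g => exists x, sat (scons x e) g
  end.

Definition definable1 (R : hf -> Prop) : Prop :=
  exists f, forall e, sat e f <-> R (e 0).
Definition definable2 (R : hf -> hf -> Prop) : Prop :=
  exists f, forall e, sat e f <-> R (e 0) (e 1).

Definition injective {A B : Type} (g : A -> B) : Prop := forall x y, g x = g y -> x = y.

Definition WS_interpretable_in_HF : Prop :=
  exists (f0 : Ord -> hf) (f1 : FinSet -> hf),
    injective f0 /\ injective f1 /\
    definable1 (fun y => exists x, y = f0 x) /\
    definable1 (fun y => exists S, y = f1 S) /\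
    definable2 (fun y z => exists x x', y = f0 x /\ z = f0 x' /\ ord_lt x x') /\
    definable2 (fun y z => exists x x', y = f0 x /\ z = f0 x' /\ psi_graph x x') /\
    definable2 (fun y z => exists x (S : FinSet), y = f0 x /\ z = f1 S /\ proj1_sig S x).

End Defs.

(* An ordinal below omega^alpha is a descending list of exponents below alpha, its Cantor
   normal form.  Code a list [b1; ...; bn] in HF(alpha) by nested pairs of its terms and the
   ordinal by the set of the codes of all prefixes of its normal form.  The codes of ordinals
   are then first-order definable: sets of nested pairs closed under dropping the last term,
   descending, and generated by a single element.  On codes the order becomes "proper prefix
   or first difference", and psi cuts the normal form at the first occurrence of its last
   exponent b and appends the successor of b; both are first-order properties of the codes.
   A finite set of ordinals is coded by the finite set of their codes. *)

From Stdlib Require Import List Sorting.Sorted Classes.RelationClasses ClassicalEpsilon Classical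
  FunctionalExtensionality PropExtensionality ProofIrrelevance Lia.
Import ListNotations.
Set Implicit Arguments.
Unset Strict Implicit.

Section HereditarilyFinite.
Variable T : Type.

Fixpoint tree_nested_ind (P : tree T -> Prop) (HA : forall a, P (Atom a))
  (HN : forall l, (forall x, In x l -> P x) -> P (Node l)) (t : tree T) : P t :=
  match t with
  | Atom a => HA a
  | Node l => HN l ((fix go (l : list (tree T)) : forall x, In x l -> P x :=
      match l with
      | nil => fun x (H : In x nil) => False_ind _ H
      | y :: l' => fun x H => match H with
                   | or_introl e => eq_ind y P (@tree_nested_ind P HA HN y) x e
                   | or_intror H' => go l' x H' end
      end) l)
  end.

Lemma eqv_refl (t : tree T) : eqv t t.
Proof.
  induction t using tree_nested_ind.
  - constructor.
  - constructor; intros x Hx; exists x; auto.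
Qed.

Lemma eqv_sym (t s : tree T) : eqv t s -> eqv s t.
Proof.
  revert s; induction t as [a|l IH] using tree_nested_ind;
    intros s H; inversion H as [|l0 m A1 A2]; subst; constructor.
  - intros y Hy. destruct (A2 y Hy) as [x [Hx E]]. exists x; auto.
  - intros x Hx. destruct (A1 x Hx) as [y [Hy E]]. exists y; auto.
Qed.

Lemma eqv_trans (t s u : tree T) : eqv t s -> eqv s u -> eqv t u.
Proof.
  revert s u; induction t as [a|l IH] using tree_nested_ind;
    intros s u H1 H2; inversion H1 as [|l0 m A1 A2]; subst; [exact H2|].
  inversion H2 as [|m0 n B1 B2]; subst. constructor.
  - intros x Hx. destruct (A1 x Hx) as [y [Hy E]]. destruct (B1 y Hy) as [z [Hz E']].
    exists z; eauto.
  - intros z Hz. destruct (B2 z Hz) as [y [Hy E]]. destruct (A2 y Hy) as [x [Hx E']].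
    exists x; eauto.
Qed.

Lemma rep_eqv (t : tree T) : eqv (rep t) t.
Proof.
  apply (epsilon_spec (inhabits t) (fun s => eqv s t)). exists t; apply eqv_refl.
Qed.

Lemma rep_eqv_eq (t s : tree T) : eqv t s -> rep t = rep s.
Proof.
  intro H. unfold rep.
  assert (E : (fun u => eqv u t) = (fun u => eqv u s)).
  { apply functional_extensionality; intro u; apply propositional_extensionality.
    split; intro; eauto using eqv_trans, eqv_sym. }
  rewrite E. f_equal. apply proof_irrelevance.
Qed.

Lemma rep_idem (t : tree T) : rep (rep t) = rep t.
Proof. apply rep_eqv_eq, rep_eqv. Qed.

Definition hf_of_tree (t : tree T) : hf T := exist _ (rep t) (rep_idem t).

Lemma hf_eqv_eq (x y : hf T) : eqv (proj1_sig x) (proj1_sig y) -> x = y.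
Proof.
  destruct x as [x Hx], y as [y Hy]; simpl; intro H.
  assert (x = y) by (rewrite <- Hx, <- Hy; apply rep_eqv_eq; auto).
  subst. f_equal. apply proof_irrelevance.
Qed.

Lemma hf_of_tree_val (x : hf T) : hf_of_tree (proj1_sig x) = x.
Proof. apply hf_eqv_eq, rep_eqv. Qed.

Definition atom (a : T) : hf T := hf_of_tree (Atom a).

Lemma atom_val (a : T) : proj1_sig (atom a) = Atom a.
Proof.
  assert (E := rep_eqv (Atom a)). simpl. destruct (rep (Atom a)); inversion E; auto.
Qed.

Lemma hf_AtP (x : hf T) : hf_At x <-> exists a, x = atom a.
Proof.
  unfold hf_At; split; intros [a Ha]; exists a.
  - apply hf_eqv_eq. rewrite Ha, atom_val. constructor.
  - subst; apply atom_val.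
Qed.

Lemma atom_At (a : T) : hf_At (atom a).
Proof. apply hf_AtP; eauto. Qed.

Lemma atom_inj (a b : T) : atom a = atom b -> a = b.
Proof.
  intro H. assert (E := f_equal (@proj1_sig _ _) H). rewrite !atom_val in E.
  inversion E; auto.
Qed.

Lemma notAt_val_Node (x : hf T) : ~ hf_At x -> exists l, proj1_sig x = Node l.
Proof.
  intro H. destruct (proj1_sig x) as [a|l] eqn:E; eauto.
  exfalso; apply H; exists a; auto.
Qed.

Lemma hf_in_Node (z x : hf T) (l : list (tree T)) : proj1_sig x = Node l ->
  hf_in z x <-> exists t, In t l /\ z = hf_of_tree t.
Proof.
  intro Hl. unfold hf_in. rewrite Hl. split.
  - intros [l' [E [t [Ht Et]]]]. injection E as <-. exists t; split; auto.
    rewrite <- (hf_of_tree_val z). apply hf_eqv_eq; simpl. rewrite (rep_eqv_eq Et). apply eqv_refl.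
  - intros [t [Ht ->]]. exists l; split; auto. exists t; split; auto. apply eqv_sym, rep_eqv.
Qed.

Lemma hf_ext (x y : hf T) : ~ hf_At x -> ~ hf_At y ->
  (forall z, hf_in z x <-> hf_in z y) -> x = y.
Proof.
  intros Hx Hy H.
  destruct (notAt_val_Node Hx) as [l Hl], (notAt_val_Node Hy) as [m Hm].
  apply hf_eqv_eq. rewrite Hl, Hm. constructor.
  - intros t Ht. assert (Hz : hf_in (hf_of_tree t) y) by (apply H, (hf_in_Node _ Hl); eauto).
    apply (hf_in_Node _ Hm) in Hz. destruct Hz as [t' [Ht' E]]. exists t'; split; auto.
    apply (f_equal (@proj1_sig _ _)) in E; simpl in E.
    apply eqv_trans with (rep t); [apply eqv_sym, rep_eqv|]. rewrite E. apply rep_eqv.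
  - intros t Ht. assert (Hz : hf_in (hf_of_tree t) x) by (apply H, (hf_in_Node _ Hm); eauto).
    apply (hf_in_Node _ Hl) in Hz. destruct Hz as [t' [Ht' E]]. exists t'; split; auto.
    apply (f_equal (@proj1_sig _ _)) in E; simpl in E.
    apply eqv_trans with (rep t); [|apply rep_eqv]. rewrite E. apply eqv_sym, rep_eqv.
Qed.

Definition set_of (L : list (hf T)) : hf T := hf_of_tree (Node (map (@proj1_sig _ _) L)).

Lemma set_of_notAt (L : list (hf T)) : ~ hf_At (set_of L).
Proof.
  intros [a Ha]. assert (E := rep_eqv (Node (map (@proj1_sig _ _) L))).
  simpl in Ha. rewrite Ha in E. inversion E.
Qed.

Lemma set_of_in (L : list (hf T)) (z : hf T) : hf_in z (set_of L) <-> In z L.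
Proof.
  destruct (notAt_val_Node (@set_of_notAt L)) as [l Hl].
  rewrite (hf_in_Node _ Hl).
  assert (E := rep_eqv (Node (map (@proj1_sig _ _) L))). simpl in Hl. rewrite Hl in E.
  inversion E as [|l0 m H1 H2]; subst. split.
  - intros [t [Ht ->]]. destruct (H1 t Ht) as [u [Hu Eu]].
    apply in_map_iff in Hu. destruct Hu as [w [<- Hw]].
    replace (hf_of_tree t) with w; auto. rewrite <- (hf_of_tree_val w).
    apply hf_eqv_eq; simpl. rewrite (rep_eqv_eq Eu). apply eqv_refl.
  - intro Hz. destruct (H2 (proj1_sig z)) as [t [Ht Et]]; [apply in_map; auto|].
    exists t; split; auto. rewrite <- (hf_of_tree_val z). apply hf_eqv_eq; simpl.
    rewrite (rep_eqv_eq Et). apply eqv_refl.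
Qed.

Lemma hf_in_finite (x : hf T) : ~ hf_At x -> exists L, forall z, hf_in z x <-> In z L.
Proof.
  intro Hx. destruct (notAt_val_Node Hx) as [l Hl]. exists (map hf_of_tree l). intro z.
  rewrite (hf_in_Node _ Hl), in_map_iff. split; intros [t [H1 H2]]; eauto.
Qed.

Lemma hf_in_wf : well_founded (@hf_in T).
Proof.
  assert (H : forall t (x : hf T), eqv (proj1_sig x) t -> Acc (@hf_in T) x).
  { induction t as [a|l IH] using tree_nested_ind; intros x Hx; constructor;
      intros z [m [Hm [t [Ht E]]]]; rewrite Hm in Hx; inversion Hx as [|m0 l0 H1 H2]; subst.
    destruct (H1 t Ht) as [t' [Ht' E']]. apply (IH t' Ht'). eauto using eqv_trans, eqv_sym. }
  intro x. apply (H (proj1_sig x)), eqv_refl.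
Qed.

End HereditarilyFinite.

Section Definability.
Variable T : Type.
Variable lt : T -> T -> Prop.
Notation hf := (hf T).

Definition definable (R : (nat -> hf) -> Prop) : Prop := exists f, forall e, sat lt e f <-> R e.

Definition up_ren (s : nat -> nat) (n : nat) : nat := match n with 0 => 0 | S k => S (s k) end.

Fixpoint ren (s : nat -> nat) (f : form) : form :=
  match f with
  | FLt i j => FLt (s i) (s j)
  | FAt i => FAt (s i)
  | FIn i j => FIn (s i) (s j)
  | FEq i j => FEq (s i) (s j)
  | FNot g => FNot (ren s g)
  | FAnd g h => FAnd (ren s g) (ren s h)
  | FEx g => FEx (ren (up_ren s) g)
  end.

Lemma sat_ren (f : form) : forall s e, sat lt e (ren s f) <-> sat lt (fun n => e (s n)) f.
Proof.
  induction f; intros s e; simpl; try tauto.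
  - rewrite IHf; tauto.
  - rewrite IHf1, IHf2; tauto.
  - assert (Hup : forall x, (fun n => scons x e (up_ren s n)) = scons x (fun n => e (s n)))
      by (intro x; apply functional_extensionality; intros [|n]; reflexivity).
    split; intros [x Hx]; exists x; rewrite IHf, Hup in *; exact Hx.
Qed.

Lemma definable_ren (R : (nat -> hf) -> Prop) (s : nat -> nat) :
  definable R -> definable (fun e => R (fun n => e (s n))).
Proof. intros [f Hf]. exists (ren s f). intro e. rewrite sat_ren. apply Hf. Qed.

Lemma definable_iff (R S : (nat -> hf) -> Prop) :
  (forall e, R e <-> S e) -> definable R -> definable S.
Proof. intros H [f Hf]; exists f; intro e; rewrite Hf; apply H. Qed.

Lemma definable_and (A B : (nat -> hf) -> Prop) :
  definable A -> definable B -> definable (fun e => A e /\ B e).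
Proof. intros [f Hf] [g Hg]; exists (FAnd f g); intro e; simpl; rewrite Hf, Hg; tauto. Qed.

Lemma definable_not (A : (nat -> hf) -> Prop) : definable A -> definable (fun e => ~ A e).
Proof. intros [f Hf]; exists (FNot f); intro e; simpl; rewrite Hf; tauto. Qed.

Lemma definable_ex (P : hf -> (nat -> hf) -> Prop) :
  definable (fun e => P (e 0) (fun n => e (S n))) -> definable (fun e => exists x, P x e).
Proof.
  intros [f Hf]. exists (FEx f). intro e; simpl.
  split; intros [x Hx]; exists x; [apply Hf in Hx | apply Hf]; exact Hx.
Qed.

Lemma definable_or (A B : (nat -> hf) -> Prop) :
  definable A -> definable B -> definable (fun e => A e \/ B e).
Proof.
  intros HA HB. apply definable_iff with (fun e => ~ (~ A e /\ ~ B e)); [intro; tauto|].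
  apply definable_not, definable_and; apply definable_not; auto.
Qed.

Lemma definable_imp (A B : (nat -> hf) -> Prop) :
  definable A -> definable B -> definable (fun e => A e -> B e).
Proof.
  intros HA HB. apply definable_iff with (fun e => ~ (A e /\ ~ B e)); [intro; tauto|].
  apply definable_not, definable_and, definable_not; auto.
Qed.

Lemma definable_all (P : hf -> (nat -> hf) -> Prop) :
  definable (fun e => P (e 0) (fun n => e (S n))) -> definable (fun e => forall x, P x e).
Proof.
  intro H. apply definable_iff with (fun e => ~ exists x, ~ P x e).
  - intro e; split; [intros H1 x; apply NNPP; eauto | intros H1 [x Hx]; auto].
  - apply definable_not, (@definable_ex (fun x e => ~ P x e)), definable_not, H.
Qed.

Lemma definable_in (i j : nat) : definable (fun e => hf_in (e i) (e j)).
Proof. exists (FIn i j); intro; simpl; tauto. Qed.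
Lemma definable_lt (i j : nat) : definable (fun e => hf_lt lt (e i) (e j)).
Proof. exists (FLt i j); intro; simpl; tauto. Qed.
Lemma definable_At (i : nat) : definable (fun e => hf_At (e i)).
Proof. exists (FAt i); intro; simpl; tauto. Qed.
Lemma definable_eq (i j : nat) : definable (fun e => e i = e j).
Proof. exists (FEq i j); intro; simpl; tauto. Qed.
Lemma definable1_at (P : hf -> Prop) :
  definable (fun e => P (e 0)) -> forall i, definable (fun e => P (e i)).
Proof. intros H i. exact (definable_ren (fun _ => i) H). Qed.

Lemma definable2_at (P : hf -> hf -> Prop) :
  definable (fun e => P (e 0) (e 1)) -> forall i j, definable (fun e => P (e i) (e j)).
Proof. intros H i j. exact (definable_ren (fun n => match n with 0 => i | _ => j end) H). Qed.

Lemma definable3_at (P : hf -> hf -> hf -> Prop) :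
  definable (fun e => P (e 0) (e 1) (e 2)) ->
  forall i j k, definable (fun e => P (e i) (e j) (e k)).
Proof.
  intros H i j k. exact (definable_ren (fun n => match n with 0 => i | 1 => j | _ => k end) H).
Qed.

End Definability.

(* Decomposes a goal [definable lt (fun e => φ)] along the syntax of φ, whose atomic
   formulas must mention variables only as [e i]. *)
Ltac definable_step :=
  match goal with
  | |- definable _ (fun e => @?A e /\ @?B e) => apply (@definable_and _ _ A B)
  | |- definable _ (fun e => @?A e \/ @?B e) => apply (@definable_or _ _ A B)
  | |- definable _ (fun e => ~ @?A e) => apply (@definable_not _ _ A)
  | |- definable _ (fun e => exists x, @?P x e) => apply (@definable_ex _ _ P); cbv beta
  | |- definable _ (fun e => forall x : hf _, @?P x e) => apply (@definable_all _ _ P); cbv beta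
  | |- definable _ (fun e => @?A e -> @?B e) => apply (@definable_imp _ _ A B)
  | |- definable _ (fun e => hf_in (e ?i) (e ?j)) => apply definable_in
  | |- definable _ (fun e => hf_lt _ (e ?i) (e ?j)) => apply definable_lt
  | |- definable _ (fun e => hf_At (e ?i)) => apply definable_At
  | |- definable _ (fun e => e ?i = e ?j) => apply definable_eq
  end.

Lemma list_snoc_case {A : Type} (l : list A) : l = [] \/ exists l' a, l = l' ++ [a].
Proof.
  destruct l as [|x l]; [left; auto|right].
  assert (H : x :: l <> []) by discriminate.
  destruct (exists_last H) as [l' [a E]]. eauto.
Qed.

Section Prefix.
Variable A : Type.

Definition prefix (p l : list A) : Prop := exists s, l = p ++ s.

Definition prefixes (l : list A) : list (list A) :=
  map (fun n => firstn n l) (seq 0 (S (length l))).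

Lemma In_prefixes (p l : list A) : In p (prefixes l) <-> prefix p l.
Proof.
  unfold prefixes; rewrite in_map_iff; split.
  - intros [n [<- _]]. exists (skipn n l). symmetry; apply firstn_skipn.
  - intros [s ->]. exists (length p). split.
    + rewrite firstn_app, firstn_all. replace (length p - length p) with 0 by lia. apply app_nil_r.
    + apply in_seq. rewrite length_app; lia.
Qed.

Lemma prefix_refl (l : list A) : prefix l l.
Proof. exists []; rewrite app_nil_r; auto. Qed.

Lemma prefix_nil (l : list A) : prefix [] l.
Proof. exists l; auto. Qed.

Lemma prefix_trans (a b c : list A) : prefix a b -> prefix b c -> prefix a c.
Proof. intros [s ->] [t ->]. exists (s ++ t). rewrite app_assoc; auto. Qed.

Lemma prefix_app_l (p s l : list A) : prefix (p ++ s) l -> prefix p l.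
Proof. intro H. apply prefix_trans with (p ++ s); auto. exists s; auto. Qed.

Lemma prefix_snoc (p l : list A) (a : A) : prefix p (l ++ [a]) -> prefix p l \/ p = l ++ [a].
Proof.
  intros [s E]. destruct (list_snoc_case s) as [->|[s' [a' ->]]].
  - right; rewrite app_nil_r in E; auto.
  - left. rewrite app_assoc in E. apply app_inj_tail in E. destruct E as [-> _]. exists s'; auto.
Qed.

Lemma prefix_length (p l : list A) : prefix p l -> length p <= length l.
Proof. intros [s ->]; rewrite length_app; lia. Qed.

Lemma prefix_antisym (p l : list A) : prefix p l -> prefix l p -> p = l.
Proof.
  intros [s E] H. apply prefix_length in H. subst. rewrite length_app in H.
  destruct s; [rewrite app_nil_r; auto | simpl in H; lia].
Qed.

Lemma prefix_cons (x y : A) (l m : list A) : prefix (x :: l) (y :: m) <-> x = y /\ prefix l m.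
Proof.
  split.
  - intros [s E]. injection E as -> E. split; auto. exists s; auto.
  - intros [-> [s ->]]. exists s; auto.
Qed.

End Prefix.

Section ListCodes.
Variable T : Type.
Notation hf := (hf T).

(* [b1; ...; bn] is coded as the nested pairs {bn, {b(n-1), ... {b1, {}} ...}}. *)
Definition list_code (l : list T) : hf := fold_left (fun w a => set_of [atom a; w]) l (set_of []).

Lemma list_code_nil : list_code [] = set_of [].
Proof. reflexivity. Qed.

Lemma list_code_snoc (l : list T) (b : T) : list_code (l ++ [b]) = set_of [atom b; list_code l].
Proof. unfold list_code; rewrite fold_left_app; reflexivity. Qed.

Lemma list_code_notAt (l : list T) : ~ hf_At (list_code l).
Proof.
  destruct (list_snoc_case l) as [->|[l' [b ->]]];
    [rewrite list_code_nil | rewrite list_code_snoc]; apply set_of_notAt.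
Qed.

Lemma list_code_nil_in (z : hf) : ~ hf_in z (list_code []).
Proof. rewrite list_code_nil, set_of_in. auto. Qed.

Lemma list_code_snoc_in (l : list T) (b : T) (z : hf) :
  hf_in z (list_code (l ++ [b])) <-> z = atom b \/ z = list_code l.
Proof. rewrite list_code_snoc, set_of_in. simpl. intuition. Qed.

Lemma atom_neq_list_code (a : T) (l : list T) : atom a <> list_code l.
Proof. intro E. apply (@list_code_notAt l). rewrite <- E. apply atom_At. Qed.

Lemma list_code_inj (l m : list T) : list_code l = list_code m -> l = m.
Proof.
  revert m; induction l as [|b l IH] using rev_ind; intros m E;
    destruct (list_snoc_case m) as [->|[m' [d ->]]]; auto.
  - exfalso. apply (@list_code_nil_in (atom d)). rewrite E, list_code_snoc_in; auto.
  - exfalso. apply (@list_code_nil_in (atom b)). rewrite <- E, list_code_snoc_in; auto.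
  - assert (H1 : hf_in (atom b) (list_code (m' ++ [d]))) by (rewrite <- E, list_code_snoc_in; auto).
    assert (H2 : hf_in (list_code l) (list_code (m' ++ [d])))
      by (rewrite <- E, list_code_snoc_in; auto).
    rewrite list_code_snoc_in in H1, H2.
    destruct H1 as [H1|H1]; [|exfalso; eapply atom_neq_list_code; eauto].
    destruct H2 as [H2|H2]; [exfalso; eapply atom_neq_list_code; eauto|].
    apply atom_inj in H1. apply IH in H2. subst; auto.
Qed.

Definition prefix_code (l : list T) : hf := set_of (map list_code (prefixes l)).

Lemma prefix_code_notAt (l : list T) : ~ hf_At (prefix_code l).
Proof. apply set_of_notAt. Qed.

Lemma prefix_code_in (l : list T) (u : hf) :
  hf_in u (prefix_code l) <-> exists p, prefix p l /\ u = list_code p.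
Proof.
  unfold prefix_code; rewrite set_of_in, in_map_iff. split.
  - intros [p [<- Hp]]. exists p; split; auto. apply In_prefixes; auto.
  - intros [p [Hp ->]]. exists p; split; auto. apply In_prefixes; auto.
Qed.

Lemma list_code_in_prefix_code (p l : list T) : prefix p l -> hf_in (list_code p) (prefix_code l).
Proof. intro H. apply prefix_code_in. eauto. Qed.

Lemma prefix_code_subset (l m : list T) :
  (forall t, hf_in t (prefix_code l) -> hf_in t (prefix_code m)) <-> prefix l m.
Proof.
  split.
  - intro H. assert (H1 := H _ (list_code_in_prefix_code (prefix_refl l))).
    apply prefix_code_in in H1. destruct H1 as [p [Hp Ep]]. apply list_code_inj in Ep; subst; auto.
  - intros H t Ht. apply prefix_code_in in Ht. destruct Ht as [p [Hp ->]].
    apply list_code_in_prefix_code. eauto using prefix_trans.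
Qed.

Lemma prefix_code_inj (l m : list T) : prefix_code l = prefix_code m -> l = m.
Proof.
  intro E. apply prefix_antisym; apply prefix_code_subset; rewrite E; auto.
Qed.

Definition is_pair (u c w : hf) : Prop :=
  ~ hf_At u /\ hf_in c u /\ hf_in w u /\ forall t, hf_in t u -> t = c \/ t = w.
Definition is_empty (u : hf) : Prop := ~ hf_At u /\ forall t, ~ hf_in t u.
Definition hf_subset (Z y : hf) : Prop := forall t, hf_in t Z -> hf_in t y.
Definition is_snoc (u c w : hf) : Prop := hf_At c /\ ~ hf_At w /\ is_pair u c w.

Lemma is_pair_set_of (u c w : hf) : is_pair u c w -> u = set_of [c; w].
Proof.
  intros [Hu [H1 [H2 H3]]]. apply hf_ext; auto using set_of_notAt.
  intro z; rewrite set_of_in; simpl. split.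
  - intro Hz; destruct (H3 z Hz); auto.
  - intros [<-|[<-|[]]]; auto.
Qed.

Lemma is_empty_list_code (l : list T) : is_empty (list_code l) <-> l = [].
Proof.
  split.
  - intros [_ H]. destruct (list_snoc_case l) as [->|[l' [b ->]]]; auto.
    exfalso; apply (H (atom b)). apply list_code_snoc_in; auto.
  - intros ->. split; [apply list_code_notAt | apply list_code_nil_in].
Qed.

Lemma is_snoc_list_code (p : list T) (a : T) :
  is_snoc (list_code (p ++ [a])) (atom a) (list_code p).
Proof.
  split; [apply atom_At|]. split; [apply list_code_notAt|].
  split; [apply list_code_notAt|]. rewrite !list_code_snoc_in. intuition.
  apply list_code_snoc_in in H; auto.
Qed.

Lemma is_snoc_list_codeP (p : list T) (c w : hf) :
  is_snoc (list_code p) c w <-> exists p' a, p = p' ++ [a] /\ c = atom a /\ w = list_code p'.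
Proof.
  split; [|intros [p' [a [-> [-> ->]]]]; apply is_snoc_list_code].
  intros [Hc [Hw [_ [H1 [H2 _]]]]].
  destruct (list_snoc_case p) as [->|[p' [a ->]]]; [exfalso; eapply list_code_nil_in; eauto|].
  exists p', a. rewrite list_code_snoc_in in H1, H2. split; auto.
  destruct H1 as [H1|H1]; [|subst; exfalso; apply (@list_code_notAt p'); auto].
  destruct H2 as [H2|H2]; [subst; exfalso; apply Hw, atom_At|]. auto.
Qed.

End ListCodes.

Section SortedLists.
Variable A : Type.
Variable R : A -> A -> Prop.

Lemma Sorted_snoc (l : list A) (c : A) : Sorted R l ->
  (forall l' d, l = l' ++ [d] -> R d c) -> Sorted R (l ++ [c]).
Proof.
  revert c; induction l as [|x l IH]; intros c Hs Hc; simpl; [constructor; auto|].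
  inversion Hs; subst. constructor.
  - apply IH; auto. intros l' d E. apply (Hc (x :: l')). rewrite E; auto.
  - destruct l as [|y l]; simpl.
    + constructor. apply (Hc []). auto.
    + inversion H2; subst. constructor; auto.
Qed.

Lemma Sorted_middle (p s : list A) (d c : A) : Sorted R (p ++ d :: c :: s) -> R d c.
Proof.
  induction p as [|x p IH]; intro H; simpl in *.
  - inversion H; subst. inversion H3; auto.
  - inversion H; eauto.
Qed.

Lemma StronglySorted_app_rel (l r : list A) (a b : A) :
  StronglySorted R (l ++ r) -> In a l -> In b r -> R a b.
Proof.
  induction l as [|x l IH]; intros H Ha Hb; [destruct Ha|].
  inversion H as [|? ? Hs Hall]; subst. destruct Ha as [->|Ha]; eauto.
  rewrite Forall_forall in Hall. apply Hall, in_or_app; auto.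
Qed.

End SortedLists.

Section OrdinalCodes.
Variable T : Type.
Variable lt : T -> T -> Prop.
Notation hf := (hf T).
Notation ge := (fun x y => ~ lt x y).

Definition sorted_cells (Y : hf) : Prop :=
  ~ hf_At Y /\ forall u, hf_in u Y -> is_empty u \/
    exists c w, is_snoc u c w /\ hf_in w Y /\
      (is_empty w \/ exists d r, is_snoc w d r /\ ~ hf_lt lt d c).

Definition snoc_closed (Z : hf) : Prop :=
  forall u c w, hf_in u Z -> is_snoc u c w -> hf_in w Z.

(* Every element of [y] lies in the snoc-closure of one element [u], the code of the whole
   normal form. *)
Definition is_ord_code (y : hf) : Prop :=
  sorted_cells y /\ exists u, hf_in u y /\ forall v, hf_in v y ->
    forall Z, ~ hf_At Z -> hf_subset Z y -> hf_in u Z -> snoc_closed Z -> hf_in v Z.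

Definition ord_code (x : Ord lt) : hf := prefix_code (proj1_sig x).

Lemma ord_code_inj (x y : Ord lt) : ord_code x = ord_code y -> x = y.
Proof.
  destruct x as [x Hx], y as [y Hy]; unfold ord_code; simpl; intro E.
  apply prefix_code_inj in E. subst. f_equal; apply proof_irrelevance.
Qed.

Lemma hf_lt_atom (a b : T) : hf_lt lt (atom a) (atom b) <-> lt a b.
Proof.
  unfold hf_lt; rewrite !atom_val. split.
  - intros [a' [b' [E1 [E2 H]]]]. injection E1 as ->. injection E2 as ->. auto.
  - intro; eauto.
Qed.

Lemma hf_lt_At (x y : hf) : hf_lt lt x y -> hf_At x /\ hf_At y.
Proof. intros [a [b [E1 [E2 _]]]]. split; [exists a | exists b]; auto. Qed.

Lemma sorted_cells_list_code (Y : hf) : sorted_cells Y -> forall u, hf_in u Y ->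
  exists l, Sorted ge l /\ u = list_code l /\ forall p, prefix p l -> hf_in (list_code p) Y.
Proof.
  intros [_ HY] u. induction u as [u IH] using (well_founded_induction (@hf_in_wf T)).
  intro Hu. destruct (HY u Hu) as [He | [c [w [Hcell [HwY Hwc]]]]].
  - assert (Eu : u = list_code []).
    { destruct He as [He1 He2]. apply hf_ext; auto using list_code_notAt.
      intro z. split; intro H; exfalso; [eapply He2, H | eapply list_code_nil_in, H]. }
    exists []. split; [constructor|]. split; auto.
    intros p [s E]. destruct p; [|discriminate]. rewrite <- Eu; exact Hu.
  - destruct Hcell as [Hc [Hw Hp]].
    destruct (IH w (proj1 (proj2 (proj2 Hp))) HwY) as [l' [Hs [-> Hpre]]].
    destruct (proj1 (hf_AtP c) Hc) as [a ->].
    assert (Eu : u = list_code (l' ++ [a])) by (rewrite (is_pair_set_of Hp), list_code_snoc; auto).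
    exists (l' ++ [a]). split; [|split; auto].
    + apply Sorted_snoc; auto. intros l'' d ->.
      destruct Hwc as [Hw0 | [d' [r [Hd'r Hlt]]]].
      * apply is_empty_list_code in Hw0. destruct l''; discriminate.
      * apply is_snoc_list_codeP in Hd'r. destruct Hd'r as [p' [a' [E [-> _]]]].
        apply app_inj_tail in E. destruct E as [_ ->]. rewrite hf_lt_atom in Hlt. exact Hlt.
    + intros p Hpp. destruct (prefix_snoc Hpp) as [H1 | ->]; auto. rewrite <- Eu; exact Hu.
Qed.

Lemma snoc_closed_prefix_code (l : list T) : snoc_closed (prefix_code l).
Proof.
  intros u c w Hu Hcell. apply prefix_code_in in Hu. destruct Hu as [p [Hpl ->]].
  apply is_snoc_list_codeP in Hcell. destruct Hcell as [p' [a [-> [_ ->]]]].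
  apply list_code_in_prefix_code. eapply prefix_app_l, Hpl.
Qed.

Lemma snoc_closed_prefix (Z : hf) (p s : list T) :
  snoc_closed Z -> hf_in (list_code (p ++ s)) Z -> hf_in (list_code p) Z.
Proof.
  intro HZ. induction s as [|a s IH] using rev_ind; intro H; [rewrite app_nil_r in H; auto|].
  apply IH. rewrite app_assoc in H. exact (HZ _ _ _ H (is_snoc_list_code _ _)).
Qed.

Lemma sorted_cells_prefix_code (l : list T) : Sorted ge l -> sorted_cells (prefix_code l).
Proof.
  intro Hs. split; [apply prefix_code_notAt|]. intros u Hu.
  apply prefix_code_in in Hu. destruct Hu as [p [Hpl ->]].
  destruct (list_snoc_case p) as [->|[p' [a ->]]]; [left; apply is_empty_list_code; auto|right].
  exists (atom a), (list_code p'). split; [apply is_snoc_list_code|].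
  split; [apply list_code_in_prefix_code; eapply prefix_app_l, Hpl|].
  destruct (list_snoc_case p') as [->|[p'' [d ->]]]; [left; apply is_empty_list_code; auto|right].
  exists (atom d), (list_code p''). split; [apply is_snoc_list_code|]. rewrite hf_lt_atom.
  destruct Hpl as [s ->]. apply (@Sorted_middle _ (fun x y => ~ lt x y) p'' s).
  rewrite <- !app_assoc in Hs. exact Hs.
Qed.

Lemma is_ord_codeP (y : hf) : is_ord_code y <-> exists x, y = ord_code x.
Proof.
  split.
  - intros [Hg [u [Hu Hall]]]. destruct (sorted_cells_list_code Hg Hu) as [l [Hs [-> Hpre]]].
    exists (exist _ l Hs). unfold ord_code; simpl.
    apply hf_ext; [apply Hg | apply prefix_code_notAt|]. intro z; split.
    + intro Hz. apply (Hall z Hz (prefix_code l));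
        auto using prefix_code_notAt, snoc_closed_prefix_code, list_code_in_prefix_code,
          prefix_refl.
      intros t Ht. apply prefix_code_in in Ht. destruct Ht as [p [Hp ->]]. auto.
    + intro Hz. apply prefix_code_in in Hz. destruct Hz as [p [Hp ->]]. auto.
  - intros [[l Hs] ->]. unfold ord_code; simpl. split; [apply sorted_cells_prefix_code; auto|].
    exists (list_code l). split; [apply list_code_in_prefix_code, prefix_refl|].
    intros v Hv Z _ _ HuZ HZ. apply prefix_code_in in Hv. destruct Hv as [p [[s ->] ->]].
    eapply snoc_closed_prefix; eauto.
Qed.

End OrdinalCodes.

Section OrderAndSuccessor.
Variable T : Type.
Variable lt : T -> T -> Prop.
Notation hf := (hf T).

Lemma cnf_ltP (l m : list T) : cnf_lt lt l m <->
  (prefix l m /\ l <> m) \/ exists p c d, prefix (p ++ [c]) l /\ prefix (p ++ [d]) m /\ lt c d.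
Proof.
  revert m; induction l as [|x l IH]; intros [|y m]; simpl.
  - split; [tauto|]. intros [[_ H]|[p [c [d [[s E] _]]]]]; [auto | destruct p; discriminate].
  - split; [intros _; left; split; [apply prefix_nil | discriminate] | auto].
  - split; [tauto|].
    intros [[[s E] _]|[p [c [d [_ [[s E] _]]]]]]; [discriminate | destruct p; discriminate].
  - rewrite IH. split.
    + intros [H|[-> [[H1 H2]|[p [c [d [H1 [H2 H3]]]]]]]].
      * right. exists [], x, y. repeat split; auto; [exists l | exists m]; auto.
      * left. split; [apply prefix_cons; auto|]. intro E; injection E; auto.
      * right. exists (y :: p), c, d. simpl. rewrite !prefix_cons. auto.
    + intros [[H1 H2]|[[|z p] [c [d [H1 [H2 H3]]]]]]; simpl in *.
      * apply prefix_cons in H1. destruct H1 as [-> H1].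
        right. split; auto. left; split; auto. intro; subst; auto.
      * destruct H1 as [s E1], H2 as [t E2]. injection E1 as -> _. injection E2 as -> _. left; auto.
      * rewrite prefix_cons in H1, H2. destruct H1 as [-> H1], H2 as [-> H2].
        right. split; auto. right. exists p, c, d; auto.
Qed.

Definition code_lt (y z : hf) : Prop :=
  (hf_subset y z /\ y <> z) \/ exists u v w c d, hf_in u y /\ hf_in v z /\
    is_snoc u c w /\ is_snoc v d w /\ hf_lt lt c d.

Lemma code_lt_prefix_code (l m : list T) :
  code_lt (prefix_code l) (prefix_code m) <-> cnf_lt lt l m.
Proof.
  rewrite cnf_ltP. unfold code_lt, hf_subset. rewrite prefix_code_subset. split.
  - intros [[H1 H2]|[u [v [w [c [d [Hu [Hv [Hu' [Hv' Hlt]]]]]]]]]].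
    + left; split; auto. intro; subst; auto.
    + right. apply prefix_code_in in Hu, Hv. destruct Hu as [p [Hp ->]], Hv as [q [Hq ->]].
      apply is_snoc_list_codeP in Hu'. destruct Hu' as [p' [a [-> [-> ->]]]].
      apply is_snoc_list_codeP in Hv'. destruct Hv' as [q' [a' [-> [-> E]]]].
      apply list_code_inj in E; subst. rewrite hf_lt_atom in Hlt. exists q', a, a'; auto.
  - intros [[H1 H2]|[p [c [d [H1 [H2 H3]]]]]].
    + left; split; auto. intro E; apply prefix_code_inj in E; auto.
    + right.
      exists (list_code (p ++ [c])), (list_code (p ++ [d])), (list_code p), (atom c), (atom d).
      do 4 (split; [auto using list_code_in_prefix_code, is_snoc_list_code|]).
      apply hf_lt_atom; auto.
Qed.

Definition is_top (u y : hf) : Prop := hf_in u y /\ forall s c, hf_in s y -> ~ is_snoc s c u.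

Lemma is_top_prefix_code (u : hf) (l : list T) : is_top u (prefix_code l) <-> u = list_code l.
Proof.
  split.
  - intros [Hu Ht]. apply prefix_code_in in Hu. destruct Hu as [p [[[|a s] Es] ->]].
    + rewrite Es, app_nil_r; auto.
    + exfalso. apply (Ht (list_code (p ++ [a])) (atom a)); [|apply is_snoc_list_code].
      apply list_code_in_prefix_code. exists s. rewrite Es, <- app_assoc; auto.
  - intros ->. split; [apply list_code_in_prefix_code, prefix_refl|].
    intros s c Hs Hcell. apply prefix_code_in in Hs. destruct Hs as [q [Hq ->]].
    apply is_snoc_list_codeP in Hcell. destruct Hcell as [q' [a [-> [_ E]]]].
    apply list_code_inj in E; subst.
    apply prefix_length in Hq. rewrite length_app in Hq; simpl in Hq; lia.
Qed.

Definition is_succ_code (b c : hf) : Prop :=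
  hf_lt lt b c /\ forall d, hf_lt lt b d -> ~ hf_lt lt d c.

Lemma is_succ_code_atom (b c : T) : is_succ_code (atom b) (atom c) <-> is_succ lt b c.
Proof.
  unfold is_succ_code, is_succ; rewrite hf_lt_atom; split; intros [H1 H2]; split; auto.
  - intros d Hd Hdc. apply (H2 (atom d)); apply hf_lt_atom; auto.
  - intros d Hd. destruct (hf_lt_At Hd) as [_ Hd']. apply hf_AtP in Hd'. destruct Hd' as [d' ->].
    rewrite !hf_lt_atom in *. auto.
Qed.

Definition is_least_code (z : hf) : Prop := hf_At z /\ forall a, ~ hf_lt lt a z.

Lemma is_least_code_atom (z : T) : is_least_code (atom z) <-> is_least lt z.
Proof.
  split.
  - intros [_ H] a Ha. apply (H (atom a)), hf_lt_atom, Ha.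
  - intro H. split; [apply atom_At|]. intros a Ha. destruct (hf_lt_At Ha) as [Ha' _].
    apply hf_AtP in Ha'. destruct Ha' as [a' ->]. rewrite hf_lt_atom in Ha. apply (H a'), Ha.
Qed.

End OrderAndSuccessor.

Section PsiOnCNF.
Variable T : Type.
Variable lt : T -> T -> Prop.
Hypothesis lt_strict : StrictOrder lt.
Hypothesis lt_total : forall x y, lt x y \/ x = y \/ lt y x.
Notation ge := (fun x y => ~ lt x y).

Lemma lt_succ_iff (b c x : T) : is_succ lt b c -> lt x c <-> ~ lt b x.
Proof.
  intros [Hbc Hsucc]. split; [intros Hxc Hbx; exact (Hsucc x Hbx Hxc)|].
  intro Hbx. destruct (lt_total x b) as [H|[->|H]]; [|auto|contradiction].
  eapply StrictOrder_Transitive; eauto.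
Qed.

Lemma Sorted_ge_StronglySorted (l : list T) : Sorted ge l -> StronglySorted ge l.
Proof.
  apply Sorted_StronglySorted. intros x y z H1 H2 H3.
  destruct (lt_total x y) as [H|[->|H]]; auto. apply H2. eapply StrictOrder_Transitive; eauto.
Qed.

Lemma nlt_antisym (x b : T) : ~ lt x b -> ~ lt b x -> x = b.
Proof. intros H1 H2. destruct (lt_total x b) as [H|[H|H]]; tauto. Qed.

Definition ends_above (b : T) (p : list T) : Prop := p = [] \/ exists p' d, p = p' ++ [d] /\ lt b d.

(* With [c] the successor of the last exponent [b], adding omega^c keeps exactly the terms
   omega^d with d > b, i.e. the part of the normal form before the first occurrence of b. *)
Lemma cnf_add_term_succ_prefix (l' m : list T) (b c : T) :
  Sorted ge (l' ++ [b]) -> is_succ lt b c -> cnf_add_term lt l' c m ->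
  exists p, prefix (p ++ [b]) (l' ++ [b]) /\ ends_above b p /\ m = p ++ [c].
Proof.
  intros Hs Hsucc [l1 [l2 [-> [F1 [F2 ->]]]]]. rewrite Forall_forall in F1, F2.
  apply Sorted_ge_StronglySorted in Hs. exists l1. split; [|split; auto].
  - destruct l2 as [|x l2]; [exists []; rewrite !app_nil_r; auto|].
    assert (Hx : x = b).
    { apply nlt_antisym.
      - apply (StronglySorted_app_rel Hs); simpl; auto. apply in_or_app; simpl; auto.
      - apply (lt_succ_iff _ Hsucc), F2; simpl; auto. }
    subst x. exists (l2 ++ [b]). rewrite <- !app_assoc. reflexivity.
  - destruct (list_snoc_case l1) as [->|[p' [d ->]]]; [left; auto | right].
    exists p', d. split; auto. destruct (lt_total b d) as [H|[<-|H]]; auto; exfalso.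
    + apply (F1 b); [apply in_or_app; simpl; auto | apply Hsucc].
    + refine (StronglySorted_app_rel Hs _ _ H); [|simpl; auto].
      apply in_or_app; left; apply in_or_app; simpl; auto.
Qed.

Lemma prefix_succ_cnf_add_term (l' p : list T) (b c : T) :
  Sorted ge (l' ++ [b]) -> is_succ lt b c ->
  prefix (p ++ [b]) (l' ++ [b]) -> ends_above b p -> cnf_add_term lt l' c (p ++ [c]).
Proof.
  intros Hs Hsucc [s Es] Hp. apply Sorted_ge_StronglySorted in Hs.
  assert (F1 : Forall (fun x => ~ lt x c) p).
  { rewrite Forall_forall. intros x Hx. rewrite (lt_succ_iff _ Hsucc). intro Hbx.
    destruct Hp as [->|[p' [d [-> Hbd]]]]; [destruct Hx|].
    assert (Hxd : x = d \/ ~ lt x d).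
    { apply in_app_or in Hx. destruct Hx as [Hx|[->|[]]]; auto. right.
      rewrite Es, <- !app_assoc in Hs. apply (StronglySorted_app_rel Hs); simpl; auto. }
    destruct Hxd as [->|Hxd]; [tauto|]. apply Hxd.
    destruct (lt_total x b) as [H|[->|H]]; [eapply StrictOrder_Transitive; eauto | auto | tauto]. }
  destruct (list_snoc_case s) as [->|[s' [b' ->]]].
  - rewrite app_nil_r in Es. apply app_inj_tail in Es. destruct Es as [-> _].
    exists p, []. rewrite app_nil_r. auto.
  - rewrite app_assoc in Es. apply app_inj_tail in Es. destruct Es as [-> <-].
    exists p, (b :: s'). split; [rewrite <- app_assoc; auto|]. split; auto. split; auto.
    rewrite <- (app_assoc (p ++ [b])) in Hs.
    rewrite Forall_forall. intros x Hx. apply (lt_succ_iff _ Hsucc).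
    destruct Hx as [<-|Hx]; [apply lt_strict|].
    apply (StronglySorted_app_rel Hs); apply in_or_app; simpl; auto.
Qed.

End PsiOnCNF.

Section PsiCodes.
Variable T : Type.
Variable lt : T -> T -> Prop.
Notation hf := (hf T).

Definition code_psi_zero (y z : hf) : Prop :=
  (forall u, hf_in u y -> is_empty u) /\ exists v w o zt, is_top v z /\ is_snoc v o w /\
    is_empty w /\ is_least_code lt zt /\ is_succ_code lt zt o.

(* [y] codes l' ++ [b], whose part before the first occurrence of [b] is coded by [q];
   [z] codes that part followed by the successor [c] of [b]. *)
Definition code_psi_succ (y z : hf) : Prop :=
  exists u b w q s c v, is_top u y /\ is_snoc u b w /\ hf_in q y /\ hf_in s y /\ is_snoc s b q /\
    (is_empty q \/ exists d r, is_snoc q d r /\ hf_lt lt b d) /\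
    is_succ_code lt b c /\ is_top v z /\ is_snoc v c q.

Lemma code_psi_zero_prefix_code (l m : list T) :
  code_psi_zero (prefix_code l) (prefix_code m) <->
  l = [] /\ exists z o, is_least lt z /\ is_succ lt z o /\ m = [o].
Proof.
  split.
  - intros [Hl [v [w [o [zt [Hv [Hvo [Hw [Hzt Hs]]]]]]]]]. split.
    + apply is_empty_list_code, Hl, list_code_in_prefix_code, prefix_refl.
    + apply is_top_prefix_code in Hv; subst v.
      apply is_snoc_list_codeP in Hvo. destruct Hvo as [m' [o' [-> [-> ->]]]].
      apply is_empty_list_code in Hw; subst m'.
      destruct Hzt as [Hzt Hleast]. apply hf_AtP in Hzt. destruct Hzt as [z ->].
      exists z, o'. rewrite <- is_least_code_atom, <- is_succ_code_atom.
      split; [split; auto using atom_At | auto].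
  - intros [-> [z [o [Hz [Hs ->]]]]]. split.
    + intros u Hu. apply prefix_code_in in Hu. destruct Hu as [[|a p] [[s E] ->]]; [|discriminate].
      apply is_empty_list_code; auto.
    + exists (list_code [o]), (list_code []), (atom o), (atom z).
      split; [apply is_top_prefix_code; auto|]. split; [apply (is_snoc_list_code [] o)|].
      split; [apply is_empty_list_code; auto|].
      rewrite is_least_code_atom, is_succ_code_atom. auto.
Qed.

Lemma code_psi_succ_prefix_code (l m : list T) :
  code_psi_succ (prefix_code l) (prefix_code m) <->
  exists l' b c p, l = l' ++ [b] /\ is_succ lt b c /\ prefix (p ++ [b]) l /\
    ends_above lt b p /\ m = p ++ [c].
Proof.
  split.
  - intros (u & b & w & q & s & c & v & Hu & Hub & Hq & Hs & Hsb & Hq' & Hbc & Hv & Hvc).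
    apply is_top_prefix_code in Hu, Hv; subst u v.
    apply is_snoc_list_codeP in Hub. destruct Hub as [l' [b' [-> [-> ->]]]].
    apply prefix_code_in in Hq, Hs. destruct Hq as [p [Hpl ->]], Hs as [t [Htl ->]].
    apply is_snoc_list_codeP in Hsb. destruct Hsb as [t' [b'' [-> [E1 E2]]]].
    apply atom_inj in E1; apply list_code_inj in E2; subst t' b''.
    destruct (hf_lt_At (proj1 Hbc)) as [_ Hc]. apply hf_AtP in Hc. destruct Hc as [c' ->].
    apply is_snoc_list_codeP in Hvc. destruct Hvc as [m' [c'' [-> [E1 E2]]]].
    apply atom_inj in E1; apply list_code_inj in E2; subst m' c''.
    exists l', b', c', p. rewrite is_succ_code_atom in Hbc.
    do 4 (split; auto).
    destruct Hq' as [Hq' | [d [r [Hdr Hlt]]]]; [left; apply is_empty_list_code; auto | right].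
    apply is_snoc_list_codeP in Hdr. destruct Hdr as [p' [d' [-> [-> _]]]].
    exists p', d'. rewrite hf_lt_atom in Hlt. auto.
  - intros [l' [b [c [p [-> [Hs [Hpre [Hp ->]]]]]]]].
    exists (list_code (l' ++ [b])), (atom b), (list_code l'), (list_code p),
      (list_code (p ++ [b])), (atom c), (list_code (p ++ [c])).
    split; [apply is_top_prefix_code; auto|]. split; [apply is_snoc_list_code|].
    split; [apply list_code_in_prefix_code; eapply prefix_app_l, Hpre|].
    split; [apply list_code_in_prefix_code; auto|]. split; [apply is_snoc_list_code|].
    split.
    + destruct Hp as [-> | [p' [d [-> Hd]]]]; [left; apply is_empty_list_code; auto | right].
      exists (atom d), (list_code p'). split; [apply is_snoc_list_code | apply hf_lt_atom; auto].
    + split; [apply is_succ_code_atom; auto|].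
      split; [apply is_top_prefix_code; auto | apply is_snoc_list_code].
Qed.

End PsiCodes.

Definition code_psi {T : Type} (lt : T -> T -> Prop) (y z : hf T) : Prop :=
  code_psi_zero lt y z \/ code_psi_succ lt y z.

Lemma psi_graph_code_psi {T : Type} (lt : T -> T -> Prop) :
  StrictOrder lt -> (forall x y, lt x y \/ x = y \/ lt y x) ->
  forall x x' : Ord lt, code_psi lt (ord_code x) (ord_code x') <-> psi_graph x x'.
Proof.
  intros Hstrict Htotal [l Hl] [m Hm].
  unfold psi_graph, code_psi, ord_code; simpl.
  rewrite code_psi_zero_prefix_code, code_psi_succ_prefix_code.
  symmetry. apply or_iff_compat_l. split.
  - intros [l' [b [c [-> [Hs Hadd]]]]].
    destruct (cnf_add_term_succ_prefix Hstrict Htotal Hl Hs Hadd) as [p Hp].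
    exists l', b, c, p. auto.
  - intros [l' [b [c [p [-> [Hs [Hpre [Hp ->]]]]]]]].
    exists l', b, c. split; auto. split; auto.
    exact (prefix_succ_cnf_add_term Hstrict Htotal Hl Hs Hpre Hp).
Qed.

Section FinsetCodes.
Variable T : Type.
Variable lt : T -> T -> Prop.
Notation hf := (hf T).

Definition finset_code (S : FinSet lt) : hf :=
  set_of (map (@ord_code T lt) (proj1_sig (constructive_indefinite_description _ (proj2_sig S)))).

Lemma finset_code_in (S : FinSet lt) (y : hf) :
  hf_in y (finset_code S) <-> exists x, proj1_sig S x /\ y = ord_code x.
Proof.
  unfold finset_code.
  destruct (constructive_indefinite_description _ (proj2_sig S)) as [L HL]; simpl.
  rewrite set_of_in, in_map_iff. split.
  - intros [x [<- Hx]]. exists x; split; auto. apply HL; auto.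
  - intros [x [Hx ->]]. exists x; split; auto. apply HL; auto.
Qed.

Lemma ord_code_in_finset_code (S : FinSet lt) (x : Ord lt) :
  hf_in (ord_code x) (finset_code S) <-> proj1_sig S x.
Proof.
  rewrite finset_code_in. split; [|eauto].
  intros [x' [Hx' E]]. apply ord_code_inj in E. subst; auto.
Qed.

Lemma finset_code_inj (S S' : FinSet lt) : finset_code S = finset_code S' -> S = S'.
Proof.
  destruct S as [S HS], S' as [S' HS']; intro E.
  assert (ES : S = S').
  { apply functional_extensionality; intro x; apply propositional_extensionality.
    assert (H := ord_code_in_finset_code (exist _ S HS) x).
    assert (H' := ord_code_in_finset_code (exist _ S' HS') x).
    rewrite E in H. simpl in *. rewrite <- H, <- H'. tauto. }
  subst. f_equal. apply proof_irrelevance.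
Qed.

Definition is_finset_code (z : hf) : Prop := ~ hf_At z /\ forall y, hf_in y z -> is_ord_code lt y.

Lemma ord_codes_of_list (L : list hf) : (forall y, In y L -> exists x : Ord lt, y = ord_code x) ->
  exists K : list (Ord lt), forall x, In x K <-> In (ord_code x) L.
Proof.
  induction L as [|y L IH]; intro H; [exists []; simpl; tauto|].
  destruct (H y (or_introl eq_refl)) as [x0 ->].
  destruct IH as [K HK]; [intros; apply H; simpl; auto|].
  exists (x0 :: K). intro x; simpl. rewrite HK.
  split; intros [E|E]; auto; left; [subst | apply ord_code_inj]; auto.
Qed.

Lemma is_finset_codeP (z : hf) : is_finset_code z <-> exists S, z = finset_code S.
Proof.
  split.
  - intros [Hz Hall]. destruct (hf_in_finite Hz) as [L HL].
    destruct (@ord_codes_of_list L) as [K HK]; [intros y Hy; apply is_ord_codeP, Hall, HL; auto|].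
    assert (HS : exists l, forall x : Ord lt, hf_in (ord_code x) z <-> In x l).
    { exists K. intro x. rewrite HK, HL; tauto. }
    exists (exist (fun S : Ord lt -> Prop => exists l, forall x, S x <-> In x l) _ HS).
    apply hf_ext; [exact Hz | apply set_of_notAt|].
    intro y. rewrite finset_code_in. simpl. split.
    + intro Hy. destruct (proj1 (is_ord_codeP lt y) (Hall y Hy)) as [x ->]. eauto.
    + intros [x [Hx ->]]; auto.
  - intros [S ->]. split; [apply set_of_notAt|]. intros y Hy.
    apply finset_code_in in Hy. destruct Hy as [x [_ ->]]. apply is_ord_codeP; eauto.
Qed.

End FinsetCodes.

Section DefinableCodes.
Variable T : Type.
Variable lt : T -> T -> Prop.
Notation hf := (hf T).

Lemma definable_is_pair (i j k : nat) : definable lt (fun e => is_pair (e i) (e j) (e k)).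
Proof. apply (definable3_at (P := @is_pair T)). unfold is_pair. repeat definable_step. Qed.

Lemma definable_is_empty (i : nat) : definable lt (fun e => is_empty (e i)).
Proof. apply (definable1_at (P := @is_empty T)). unfold is_empty. repeat definable_step. Qed.

Lemma definable_hf_subset (i j : nat) : definable lt (fun e => hf_subset (e i) (e j)).
Proof. apply (definable2_at (P := @hf_subset T)). unfold hf_subset. repeat definable_step. Qed.

Lemma definable_is_snoc (i j k : nat) : definable lt (fun e => is_snoc (e i) (e j) (e k)).
Proof.
  apply (definable3_at (P := @is_snoc T)). unfold is_snoc.
  repeat first [definable_step | apply definable_is_pair].
Qed.

Ltac definable_code :=
  repeat first [definable_step | apply definable_is_empty | apply definable_hf_subset
               | apply definable_is_snoc].

Lemma definable_snoc_closed (i : nat) : definable lt (fun e => snoc_closed (e i)).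
Proof. apply (definable1_at (P := @snoc_closed T)). unfold snoc_closed. definable_code. Qed.

Lemma definable_sorted_cells (i : nat) : definable lt (fun e => sorted_cells lt (e i)).
Proof. apply (definable1_at (P := sorted_cells lt)). unfold sorted_cells. definable_code. Qed.

Lemma definable_is_ord_code (i : nat) : definable lt (fun e => is_ord_code lt (e i)).
Proof.
  apply (definable1_at (P := is_ord_code lt)). unfold is_ord_code.
  definable_code; first [apply definable_sorted_cells | apply definable_snoc_closed].
Qed.

Lemma definable_is_finset_code (i : nat) : definable lt (fun e => is_finset_code lt (e i)).
Proof.
  apply (definable1_at (P := is_finset_code lt)). unfold is_finset_code.
  repeat first [definable_step | apply definable_is_ord_code].
Qed.

Lemma definable_code_lt (i j : nat) : definable lt (fun e => code_lt lt (e i) (e j)).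
Proof. apply (definable2_at (P := code_lt lt)). unfold code_lt. definable_code. Qed.

Lemma definable_is_top (i j : nat) : definable lt (fun e => is_top (e i) (e j)).
Proof. apply (definable2_at (P := @is_top T)). unfold is_top. definable_code. Qed.

Lemma definable_is_succ_code (i j : nat) : definable lt (fun e => is_succ_code lt (e i) (e j)).
Proof. apply (definable2_at (P := is_succ_code lt)). unfold is_succ_code. definable_code. Qed.

Lemma definable_is_least_code (i : nat) : definable lt (fun e => is_least_code lt (e i)).
Proof. apply (definable1_at (P := is_least_code lt)). unfold is_least_code. definable_code. Qed.

Lemma definable_code_psi (i j : nat) : definable lt (fun e => code_psi lt (e i) (e j)).
Proof.
  apply (definable2_at (P := code_psi lt)). unfold code_psi, code_psi_zero, code_psi_succ.
  repeat first [definable_step | apply definable_is_empty | apply definable_is_snoc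
               | apply definable_is_top | apply definable_is_succ_code
               | apply definable_is_least_code].
Qed.

Lemma definable2_graph (A B : Type) (f : A -> hf) (g : B -> hf)
    (in_f in_g : hf -> Prop) (Q : hf -> hf -> Prop) (Rel : A -> B -> Prop) :
  (forall y, in_f y <-> exists x, y = f x) -> (forall z, in_g z <-> exists x, z = g x) ->
  (forall x x', Q (f x) (g x') <-> Rel x x') ->
  (forall i, definable lt (fun e => in_f (e i))) ->
  (forall i, definable lt (fun e => in_g (e i))) ->
  definable lt (fun e => Q (e 0) (e 1)) ->
  definable2 lt (fun y z => exists x x', y = f x /\ z = g x' /\ Rel x x').
Proof.
  intros Hf Hg HRel Df Dg DQ.
  apply (@definable_iff _ _ (fun e => in_f (e 0) /\ in_g (e 1) /\ Q (e 0) (e 1))).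
  - intro e. rewrite Hf, Hg. split.
    + intros [[x Ex] [[x' Ex'] H]]. exists x, x'. rewrite Ex, Ex' in *. rewrite <- HRel. auto.
    + intros [x [x' [-> [-> H]]]]. rewrite HRel. eauto.
  - apply definable_and; [apply Df | apply definable_and; [apply Dg | apply DQ]].
Qed.

End DefinableCodes.

Theorem lemma15 (T : Type) (lt : T -> T -> Prop) :
  nonzero_limit_ordinal lt -> WS_interpretable_in_HF lt.
Proof.
  intros [Hstrict [Htotal _]].
  exists (@ord_code T lt), (@finset_code T lt).
  split; [exact (@ord_code_inj T lt)|]. split; [exact (@finset_code_inj T lt)|].
  split; [exact (definable_iff (fun e => is_ord_codeP lt (e 0)) (definable_is_ord_code lt 0))|].
  split; [exact (definable_iff (fun e => is_finset_codeP lt (e 0))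
                   (definable_is_finset_code lt 0))|].
  split; [|split].
  - apply (definable2_graph (is_ord_codeP lt) (is_ord_codeP lt) (Q := code_lt lt));
      auto using definable_is_ord_code, definable_code_lt.
    intros x x'. apply code_lt_prefix_code.
  - apply (definable2_graph (is_ord_codeP lt) (is_ord_codeP lt) (Q := code_psi lt));
      auto using definable_is_ord_code, definable_code_psi, psi_graph_code_psi.
  - apply (definable2_graph (is_ord_codeP lt) (is_finset_codeP lt) (Q := @hf_in T));
      auto using definable_is_ord_code, definable_is_finset_code, definable_in,
      ord_code_in_finset_code.
Qed.
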